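(* Let $\Omega$ be a set and let $G\le\mathrm{Sym}(\Omega)$ be $k$-by-block-transitive on $\Omega$ relative to the equivalence relation $\sim$, for some $k\ge 2$. Then for each $\omega\in\Omega$, the block stabilizer $G([\omega])$ is the largest proper subgroup of $G$ containing $G(\omega)$ (every proper subgroup of $G$ containing $G(\omega)$ is contained in $G([\omega])$). Equivalently, $\sim$ is the coarsest nonuniversal $G$-invariant equivalence relation on $\Omega$.
   Context: Blocks are $\sim$-classes; $[\omega]$ is the block of $\omega$, $G([\omega])$ its setwise stabilizer, $G(\omega)$ the stabilizer of $\omega$. $\Omega^{[k]}$ is the set of $k$-tuples no two entries of which lie in the same block. $G$ is $k$-by-block-transitive if $\sim$ is $G$-invariant, there are at least $k$ blocks, and $G$ is transitive on $\Omega^{[k]}$. *)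

From mathcomp Require Import all_boot.
Set Implicit Arguments. Unset Strict Implicit. Unset Printing Implicit Defensive.

Definition is_perm_group (Omega : Type) (G : (Omega -> Omega) -> Prop) : Prop :=
  [/\ (forall g, G g -> bijective g),
      G id,
      (forall g h, G g -> G h -> G (g \o h)) &
      (forall g, G g -> exists h, [/\ G h, cancel g h & cancel h g])].

Definition subgroup (Omega : Type) (H G : (Omega -> Omega) -> Prop) : Prop :=
  [/\ (forall g, H g -> G g),
      H id,
      (forall g h, H g -> H h -> H (g \o h)) &
      (forall g, H g -> exists h, [/\ H h, cancel g h & cancel h g])].

Definition proper_subgroup (Omega : Type) (H G : (Omega -> Omega) -> Prop) : Prop :=
  subgroup H G /\ exists g, G g /\ ~ H g.

Definition is_equiv (Omega : Type) (R : Omega -> Omega -> Prop) : Prop :=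
  [/\ (forall x, R x x), (forall x y, R x y -> R y x) &
      (forall x y z, R x y -> R y z -> R x z)].

Definition G_invariant (Omega : Type) (R : Omega -> Omega -> Prop)
  (G : (Omega -> Omega) -> Prop) : Prop :=
  forall g, G g -> forall x y, R x y <-> R (g x) (g y).

Definition block (Omega : Type) (R : Omega -> Omega -> Prop) (w : Omega) : Omega -> Prop :=
  fun x => R x w.

Definition setwise_stab (Omega : Type) (G : (Omega -> Omega) -> Prop) (B : Omega -> Prop) :
  (Omega -> Omega) -> Prop :=
  fun g => G g /\ forall y, B y <-> exists x, B x /\ g x = y.

Definition point_stab (Omega : Type) (G : (Omega -> Omega) -> Prop) (w : Omega) :
  (Omega -> Omega) -> Prop :=
  fun g => G g /\ g w = w.

Definition in_block_tuples (Omega : Type) (R : Omega -> Omega -> Prop) (k : nat)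
  (t : 'I_k -> Omega) : Prop :=
  forall i j : 'I_k, i <> j -> ~ R (t i) (t j).

Definition k_by_block_transitive (Omega : Type) (G : (Omega -> Omega) -> Prop)
  (R : Omega -> Omega -> Prop) (k : nat) : Prop :=
  [/\ is_equiv R, G_invariant R G,
      (exists t : 'I_k -> Omega, in_block_tuples R t) &
      (forall s t : 'I_k -> Omega, in_block_tuples R s -> in_block_tuples R t ->
         exists g, G g /\ forall i, g (s i) = t i)].

From Stdlib Require Import Classical FunctionalExtensionality.
From mathcomp Require Import all_boot.
From mathcomp Require Import fingroup perm.
Set Implicit Arguments. Unset Strict Implicit. Unset Printing Implicit Defensive.

(* Two-by-block-transitivity does all the work: since any unrelated pair
   (x, y) extends to a k-tuple with distinct blocks, G maps any unrelated pair
   onto any other.  A subgroup H containing G(w) is a union of cosets of G(w),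
   so it contains every g with g(w) outside [w] as soon as it contains one such
   element, and then every g at all, by composing with such an element.
   Likewise a G-invariant equivalence relating one unrelated pair relates all
   of them, and then, since every block has a point outside it, everything. *)

Section BlockTuples.

Variables (Omega : Type) (R : Omega -> Omega -> Prop).
Hypothesis R_equiv : is_equiv R.

Let R_sym x y : R x y -> R y x. Proof. by case: R_equiv => _ + _; apply. Qed.
Let R_trans x y z : R x y -> R y z -> R x z.
Proof. by case: R_equiv => _ _; apply. Qed.

Lemma in_block_tuples_perm k (t : 'I_k -> Omega) (s : 'I_k -> 'I_k) :
  in_block_tuples R t -> injective s -> in_block_tuples R (t \o s).
Proof. by move=> Ht s_inj i j ij; apply: Ht => /s_inj. Qed.

Lemma in_block_tuples_set k (t : 'I_k -> Omega) p z :
  in_block_tuples R t -> (forall l, l != p -> ~ R z (t l)) ->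
  in_block_tuples R (fun l => if l == p then z else t l).
Proof.
move=> Ht Hz i j /eqP ij /=.
case: (eqVneq i p) => [ip|ip]; case: (eqVneq j p) => [jp|jp].
- by rewrite ip jp eqxx in ij.
- exact: Hz.
- by move/R_sym; apply: Hz.
- exact/Ht/eqP.
Qed.

(* [i] is the position of the block of [z] in [t], or [p] if there is none. *)
Lemma block_position k (t : 'I_k -> Omega) p z : in_block_tuples R t ->
  exists i, (forall j, j != i -> ~ R z (t j)) /\ (i != p -> R z (t i)).
Proof.
move=> Ht; case: (classic (exists i, R z (t i))) => [[i zi]|none].
  exists i; split=> // j /eqP ji zj.
  by apply: (Ht j i ji); apply: R_trans (R_sym zj) zi.
exists p; split=> [j _ zj|]; last by rewrite eqxx.
by apply: none; exists j.
Qed.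

Lemma in_block_tuples_put k (t : 'I_k -> Omega) p z : in_block_tuples R t ->
  exists t', [/\ in_block_tuples R t', t' p = z &
              forall q, q != p -> ~ R z (t q) -> t' q = t q].
Proof.
move=> Ht; have [i [zNt zi]] := block_position p z Ht.
exists (fun l => if l == p then z else t (tperm i p l)); split.
- apply: in_block_tuples_set; first exact: in_block_tuples_perm (@perm_inj _ _).
  by move=> l lp; apply: zNt; rewrite (canF_eq (tpermK i p)) tpermL.
- by rewrite eqxx.
- move=> q qp zNq; rewrite (negbTE qp) tpermD 1?eq_sym //.
  by apply/eqP => qi; apply/zNq; rewrite qi; apply: zi; rewrite -qi.
Qed.

Lemma in_block_tuples_pair k (t : 'I_k -> Omega) p q x y :
  p != q -> in_block_tuples R t -> ~ R x y ->
  exists s : 'I_k -> Omega, [/\ in_block_tuples R s, s p = x & s q = y].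
Proof.
move=> pq Ht xNy.
have [t1 [Ht1 t1x _]] := in_block_tuples_put p x Ht.
have [s [Hs sy s_t1]] := in_block_tuples_put q y Ht1.
by exists s; rewrite s_t1 // t1x => /R_sym.
Qed.

End BlockTuples.

Section PermGroup.

Variables (Omega : Type) (G : (Omega -> Omega) -> Prop).
Hypothesis G_group : is_perm_group G.

Let G_comp f g : G f -> G g -> G (f \o g).
Proof. by case: G_group => _ _ + _; apply. Qed.

Lemma subgroup_cancelr (H : (Omega -> Omega) -> Prop) f g :
  subgroup H G -> H g -> H (f \o g) -> H f.
Proof.
case=> _ _ H_comp H_inv Hg Hfg; have [h [Hh gK hK]] := H_inv g Hg.
suff -> : f = (f \o g) \o h by apply: H_comp.
by apply: functional_extensionality => x /=; rewrite hK.
Qed.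

Lemma subgroup_point_stab_coset (H : (Omega -> Omega) -> Prop) w e f :
  subgroup H G -> (forall g, point_stab G w g -> H g) ->
  H e -> G f -> f w = e w -> H f.
Proof.
move=> [HG _ H_comp H_inv] stabH He Gf few.
have [c [Hc eK cK]] := H_inv e He.
have -> : f = e \o (c \o f).
  by apply: functional_extensionality => x /=; rewrite cK.
apply: H_comp => //; apply: stabH.
by split; [exact: G_comp (HG _ Hc) Gf | rewrite /= few eK].
Qed.

Section BlockTransitive.

Variables (R : Omega -> Omega -> Prop) (k : nat).
Hypothesis G_trans : k_by_block_transitive G R k.+2.

Let R_equiv : is_equiv R. Proof. by case: G_trans. Qed.
Let R_refl x : R x x. Proof. by case: R_equiv => + _ _; apply. Qed.
Let R_sym x y : R x y -> R y x. Proof. by case: R_equiv => _ + _; apply. Qed.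
Let R_trans x y z : R x y -> R y z -> R x z.
Proof. by case: R_equiv => _ _; apply. Qed.
Let R_inv : G_invariant R G. Proof. by case: G_trans. Qed.

Lemma exists_unrelated_pair : exists x y, ~ R x y.
Proof.
case: G_trans => _ _ [t Ht] _.
by exists (t ord0), (t (lift ord0 ord0)); apply: Ht => /(congr1 val).
Qed.

Lemma exists_unrelated w : exists z, ~ R w z.
Proof.
have [x [y xNy]] := exists_unrelated_pair.
case: (classic (R w x)) => [wx|]; last by exists x.
by exists y => /(R_trans (R_sym wx)).
Qed.

Lemma unrelated_pair_transitive x y u v : ~ R x y -> ~ R u v ->
  exists g, [/\ G g, g x = u & g y = v].
Proof.
case: G_trans => _ _ [t Ht] G_tuple xNy uNv.
have pq : (ord0 : 'I_k.+2) != lift ord0 ord0 := neq_lift _ _.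
have [s [Hs sx sy]] := in_block_tuples_pair R_equiv pq Ht xNy.
have [s' [Hs' s'u s'v]] := in_block_tuples_pair R_equiv pq Ht uNv.
have [g [Gg gs]] := G_tuple s s' Hs Hs'.
by exists g; rewrite -sx -sy gs -s'u -s'v.
Qed.

Lemma block_stabE w g : G g -> setwise_stab G (block R w) g <-> R (g w) w.
Proof.
move=> Gg; have [_ _ _ G_inv] := G_group.
split=> [[_ gB]|gw]; first by apply: (proj2 (gB (g w))); exists w; split.
split=> // y; split=> [yw|[x [xw <-]]].
  have [h [_ _ hK]] := G_inv g Gg.
  exists (h y); split; last exact: hK.
  by apply/(R_inv Gg _ w); rewrite hK; apply: R_trans yw (R_sym gw).
exact: R_trans (proj1 (R_inv Gg _ _) xw) gw.
Qed.

Lemma block_stab_proper w : proper_subgroup (setwise_stab G (block R w)) G.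
Proof.
have [_ G_id _ G_inv] := G_group.
split; first split.
- by move=> g [].
- by apply/block_stabE.
- move=> f g /[dup] [[Gf _]] /(block_stabE _ Gf) fw /[dup] [[Gg _]].
  move=> /(block_stabE _ Gg) gw; apply/block_stabE; first exact: G_comp.
  exact: R_trans (proj1 (R_inv Gf _ _) gw) fw.
- move=> g /[dup] [[Gg _]] /(block_stabE _ Gg) gw.
  have [h [Gh gK hK]] := G_inv g Gg.
  exists h; split=> //.
  by apply/block_stabE => //; apply/(R_inv Gg _ w); rewrite hK; apply: R_sym.
have [z wNz] := exists_unrelated w.
have [f [Gf fw _]] := unrelated_pair_transitive wNz (fun zw => wNz (R_sym zw)).
by exists f; split=> // /(block_stabE _ Gf); rewrite fw => /R_sym.
Qed.

Lemma point_stab_sub_block_stab w g :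
  point_stab G w g -> setwise_stab G (block R w) g.
Proof. by case=> Gg gw; apply/block_stabE; rewrite ?gw. Qed.

Lemma subgroup_moving_block_full (H : (Omega -> Omega) -> Prop) w g :
  subgroup H G -> (forall f, point_stab G w f -> H f) ->
  H g -> ~ R (g w) w -> forall f, G f -> H f.
Proof.
move=> subH stabH Hg gwNw.
have [HG _ H_comp _] := subH.
have moving f : G f -> ~ R (f w) w -> H f.
  move=> Gf fwNw.
  have [a [Ga aw agw]] := unrelated_pair_transitive
    (fun h => gwNw (R_sym h)) (fun h => fwNw (R_sym h)).
  apply: (subgroup_point_stab_coset (e := a \o g) subH stabH _ Gf (esym agw)).
  by apply: H_comp => //; apply: stabH.
move=> f Gf; case: (classic (R (f w) w)) => [fw|]; last exact: moving.
apply: (subgroup_cancelr (g := g)) => //.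
apply: moving; first exact: G_comp Gf (HG _ Hg).
by move=> fgw; apply/gwNw/(R_inv Gf)/(R_trans fgw)/R_sym.
Qed.

Lemma block_stab_maximal (H : (Omega -> Omega) -> Prop) w :
  proper_subgroup H G -> (forall g, point_stab G w g -> H g) ->
  forall g, H g -> setwise_stab G (block R w) g.
Proof.
move=> [subH [f [Gf Hf]]] stabH g Hg.
have Gg : G g by case: subH => + _ _ _; apply.
apply/block_stabE => //; apply: NNPP => gwNw.
exact/Hf/(subgroup_moving_block_full subH stabH Hg gwNw).
Qed.

Lemma invariant_equiv_subrel (R' : Omega -> Omega -> Prop) :
  is_equiv R' -> G_invariant R' G -> (exists x y, ~ R' x y) ->
  forall x y, R' x y -> R x y.
Proof.
move=> [_ R'_sym R'_trans] R'_inv [x0 [y0 x0Ny0]] x y xy; apply: NNPP => xNy.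
have unrelated u v : ~ R u v -> R' u v.
  move=> uNv; have [g [Gg <- <-]] := unrelated_pair_transitive xNy uNv.
  exact: (proj1 (R'_inv g Gg x y) xy).
apply: x0Ny0; case: (classic (R x0 y0)) => [x0y0|]; last exact: unrelated.
have [z x0Nz] := exists_unrelated x0.
have y0Nz : ~ R y0 z by move=> /(R_trans x0y0).
exact/(R'_trans _ _ _ (unrelated _ _ x0Nz))/R'_sym/unrelated.
Qed.

End BlockTransitive.

End PermGroup.

Theorem lemma2p3 (Omega : Type) (G : (Omega -> Omega) -> Prop)
  (R : Omega -> Omega -> Prop) (k : nat) :
  is_perm_group G -> (2 <= k)%N -> k_by_block_transitive G R k ->
  (forall w : Omega,
     [/\ proper_subgroup (setwise_stab G (block R w)) G,
         (forall g, point_stab G w g -> setwise_stab G (block R w) g) &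
         (forall H, proper_subgroup H G -> (forall g, point_stab G w g -> H g) ->
            forall g, H g -> setwise_stab G (block R w) g)])
  /\
  ((exists x y, ~ R x y) /\
   forall R' : Omega -> Omega -> Prop, is_equiv R' -> G_invariant R' G ->
     (exists x y, ~ R' x y) -> forall x y, R' x y -> R x y).
Proof.
case: k => [|[|k]] // G_group _ G_trans; split.
  move=> w; split.
  - exact: (block_stab_proper G_group G_trans).
  - exact: (point_stab_sub_block_stab G_group G_trans).
  - by move=> H; apply: (block_stab_maximal G_group G_trans).
split; first exact: (exists_unrelated_pair G_trans).
by move=> R'; apply: (invariant_equiv_subrel G_trans).
Qed.
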